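(* Let $\mathcal C=\{\mathbf s_1,\dots,\mathbf s_M\}\subseteq\{0,1\}^K$, $M\ge2$, be a binary CW code of length $K$ and weight $\omega$, used with equiprobable codewords over the Poisson channel with fixed CSI $(\bar c_{\mathrm s},\bar c_{\mathrm n})\in(0,\infty)^2$, and let $P_e^{\mathrm{code}}$ be the codeword error rate of the optimal detector. For $i\ne j$ let $d_{ij}$ be the Hamming distance between $\mathbf s_i$ and $\mathbf s_j$. Then $$P_e^{\mathrm{code}}\le\frac1M\sum_{i\ne j}\left(\tfrac12 f_{d_{ij}}(0)+\sum_{x=1}^\infty f_{d_{ij}}(x)\right),$$ where the sum is over ordered pairs $(i,j)$ with $i\neq j$ and, for $d>0$, $f_d(x)=e^{-(\lambda_1+\lambda_2)}\left(\frac{\lambda_2}{\lambda_1}\right)^{x/2}I_x\!\left(2\sqrt{\lambda_1\lambda_2}\right)$ with $\lambda_1=\frac{d(\bar c_{\mathrm s}+\bar c_{\mathrm n})}{2}$, $\lambda_2=\frac{d\,\bar c_{\mathrm n}}{2}$, and $I_x$ the modified Bessel function of the first kind of order $x$.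
   Context: A binary CW code of length $K$ and weight $\omega$ is a codebook $\mathcal C\subseteq\{0,1\}^K$ in which every codeword has exactly $\omega$ ones. Channel: given transmitted codeword $\mathbf s$, the observations $r[1],\dots,r[K]$ are independent with $r[k]$ Poisson of mean $s[k]\bar c_{\mathrm s}+\bar c_{\mathrm n}$. The optimal detector outputs a codeword maximizing the likelihood $\prod_{k}\frac{(\bar c_{\mathrm s}s[k]+\bar c_{\mathrm n})^{r[k]}e^{-\bar c_{\mathrm s}s[k]-\bar c_{\mathrm n}}}{r[k]!}$ over $\mathcal C$, ties broken uniformly at random among maximizers. The transmitted codeword is uniform on $\mathcal C$, and $P_e^{\mathrm{code}}$ is the probability that the detected codeword differs from the transmitted one. *)

From HB Require Import structures.
From mathcomp Require Import all_boot all_order all_algebra.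
From mathcomp Require Import all_classical all_reals all_analysis.
Set Implicit Arguments. Unset Strict Implicit. Unset Printing Implicit Defensive.
Import Order.TTheory GRing.Theory Num.Theory.
Local Open Scope ring_scope.

Section Defs.
Variable R : realType.

Definition besselI (n : nat) (z : R) : R :=
  \big[+%R/0%R]_(0 <= m <oo) ((z / 2) ^+ (2 * m + n) / ((m`! * (m + n)`!)%:R)).

Definition fd (cs cn : R) (d x : nat) : R :=
  let l1 := d%:R * (cs + cn) / 2 in
  let l2 := d%:R * cn / 2 in
  expR (- (l1 + l2)) * (l2 / l1) `^ (x%:R / 2) * besselI x (2 * Num.sqrt (l1 * l2)).

Definition lik (cs cn : R) (K : nat) (c : {ffun 'I_K -> bool})
    (r : {ffun 'I_K -> nat}) : R :=
  \prod_(k < K) ((cs * (c k)%:R + cn) ^+ (r k) * expR (- (cs * (c k)%:R + cn))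
                  / ((r k)`!)%:R).

Definition argmax_set (cs cn : R) (K M : nat) (s : 'I_M -> {ffun 'I_K -> bool})
    (r : {ffun 'I_K -> nat}) : {set 'I_M} :=
  [set j | [forall j', lik cs cn (s j') r <= lik cs cn (s j) r]].

(* Probability that the optimal detector (uniform tie breaking) outputs i on r. *)
Definition pdetect (cs cn : R) (K M : nat) (s : 'I_M -> {ffun 'I_K -> bool})
    (r : {ffun 'I_K -> nat}) (i : 'I_M) : R :=
  if i \in argmax_set cs cn s r then (#|argmax_set cs cn s r|%:R)^-1 else 0.

Definition Pe_code (cs cn : R) (K M : nat) (s : 'I_M -> {ffun 'I_K -> bool})
  : \bar R :=
  ((M%:R)^-1)%:E *
  (\sum_(i < M)
     \esum_(r in [set: {ffun 'I_K -> nat}])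
       (lik cs cn (s i) r * (1 - pdetect cs cn s r i))%:E)%E.

Definition hamming (K : nat) (a b : {ffun 'I_K -> bool}) : nat :=
  #|[set k | a k != b k]|.

Definition weight (K : nat) (a : {ffun 'I_K -> bool}) : nat := #|[set k | a k]|.

End Defs.

From HB Require Import structures.
From mathcomp Require Import all_boot all_order all_algebra.
From mathcomp Require Import all_classical all_reals all_analysis.
From mathcomp Require Import ring lra.
Set Implicit Arguments. Unset Strict Implicit. Unset Printing Implicit Defensive.
Import Order.TTheory GRing.Theory Num.Theory.
Import numFieldTopology.Exports.
Local Open Scope ring_scope.
Local Open Scope classical_set_scope.

(* Union bound: the detector misses [s_i] only if some [s_j] is at least as likely,
   and with uniform tie breaking the miss probability given the observation is at
   most the sum over [j <> i] of [1] if [s_j] is strictly more likely and [1/2] on a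
   tie.  For codewords of equal weight the likelihood ratio of [s_j] to [s_i] is
   [((cs + cn) / cn) ^ (Y - X)], where [X] and [Y] count the photons on the [d/2]
   slots that are on only in [s_i], resp. only in [s_j].  These counts are
   independent Poisson variables of rates [d (cs + cn) / 2] and [d cn / 2], so the
   pairwise term is [P(Y > X) + P(Y = X) / 2]; summing the product of the two
   Poisson masses along the diagonals [Y = X + x] gives the Bessel series [f_d x]. *)

Lemma big_ord_recl_cond (T : Type) (idx : T) (op : Monoid.law idx) n
    (A : pred 'I_n.+1) (F : 'I_n.+1 -> T) :
  \big[op/idx]_(i < n.+1 | A i) F i =
  op (if A ord0 then F ord0 else idx) (\big[op/idx]_(i < n | A (lift ord0 i)) F (lift ord0 i)).
Proof. by rewrite big_mkcond big_ord_recl -big_mkcond. Qed.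

Lemma card_set_predE (T : finType) (A : pred T) : #|[set x | A x]%SET| = (\sum_x A x)%N.
Proof. by rewrite -sum1_card big_mkcond; apply: eq_bigr => x _; rewrite inE; case: (A x). Qed.

Lemma sum_mask_split (I : finType) (c c' : pred I) (r : I -> nat) :
  (\sum_i c i * r i = \sum_(i | c i && ~~ c' i) r i + \sum_(i | c i && c' i) r i)%N.
Proof.
rewrite !(big_mkcond (fun i => _ && _)) -big_split; apply: eq_bigr => i _ /=.
by case: (c i); case: (c' i); rewrite ?mul1n ?addn0.
Qed.

Lemma sumr_pred_const (V : nmodType) (I : finType) (A : pred I) (x : V) :
  \sum_(i | A i) x = x *+ (\sum_i A i)%N.
Proof. by rewrite big_mkcond -sumrMnr; apply: eq_bigr => i _; case: (A i). Qed.

Section esum_facts.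
Variable R : realType.
Local Open Scope ereal_scope.

Lemma esum_pair (T1 T2 : choiceType) (G : T1 * T2 -> \bar R) :
  (forall x, 0 <= G x) ->
  \esum_(x in [set: T1 * T2]) G x =
  \esum_(a in [set: T1]) \esum_(b in [set: T2]) G (a, b).
Proof.
move=> G0; rewrite (esum_esum (J := fun=> [set: T2])) //.
have -> : [set: T1] `*`` (fun=> [set: T2]) = [set: T1 * T2] by apply/seteqP.
by apply: eq_esum => -[].
Qed.

Lemma swap_set_bij (T1 T2 : Type) :
  set_bij [set: T1 * T2] [set: T2 * T1] (fun x => (x.2, x.1)).
Proof. by split=> [[] //|[? ?] [? ?] _ _ [-> ->] //|[a b] _]; exists (b, a). Qed.

Lemma esum_swap (T1 T2 : choiceType) (G : T1 -> T2 -> \bar R) :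
  (forall a b, 0 <= G a b) ->
  \esum_(a in [set: T1]) \esum_(b in [set: T2]) G a b =
  \esum_(b in [set: T2]) \esum_(a in [set: T1]) G a b.
Proof.
move=> G0; rewrite -(esum_pair (G := fun x => G x.1 x.2)) => [|[] //].
rewrite -(esum_pair (G := fun x => G x.2 x.1)) => [|[] //].
by rewrite (reindex_esum _ _ _ _ (swap_set_bij T2 T1)).
Qed.

Lemma esum_ord (n : nat) (f : nat -> R) : (forall k, 0 <= f k)%R ->
  \esum_(k in `I_n) (f k)%:E = (\sum_(k < n) f k)%:E.
Proof.
move=> f0; rewrite esum_fset // => [|k _]; last by rewrite lee_fin.
by rewrite -fsbig_ord sumEFin.
Qed.

End esum_facts.

Section poisson_mass.
Variable R : realType.
Implicit Types (mu la : R) (n : nat).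

(* Unlike the library's [poisson_pmf], which is [1] at rate [0], this is the Dirac
   mass at [0] for rate [0], as needed for the empty position sets below. *)
Definition poisson_mass mu n : R := mu ^+ n / n`!%:R * expR (- mu).

Lemma poisson_mass_ge0 mu n : 0 <= mu -> 0 <= poisson_mass mu n.
Proof. by move=> mu0; rewrite mulr_ge0 ?expR_ge0 // divr_ge0 // exprn_ge0. Qed.

Lemma poisson_mass_conv mu la a :
  \sum_(n < a.+1) poisson_mass mu n * poisson_mass la (a - n) = poisson_mass (mu + la) a.
Proof.
rewrite /poisson_mass addrC exprDn !mulr_suml; apply: eq_bigr => n _.
have na : (n <= a)%N by rewrite -ltnS.
have fact_neq0 m : (m`!%:R : R) != 0 by rewrite pnatr_eq0 -lt0n fact_gt0.
have binR : ('C(a, n)%:R : R) * (n`!%:R * (a - n)`!%:R) = a`!%:R.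
  by rewrite -!natrM bin_fact.
rewrite opprD expRD -mulr_natr -binR; field.
by rewrite !fact_neq0 pnatr_eq0 -lt0n bin_gt0.
Qed.

Lemma poisson_mass_tilt (a b : R) n : b != 0 ->
  poisson_mass (a + b) n = expR (- a) * poisson_mass b n * ((a + b) / b) ^+ n.
Proof.
move=> b0; rewrite /poisson_mass expr_div_n opprD expRD; field.
by rewrite expf_neq0 // pnatr_eq0 -lt0n fact_gt0.
Qed.

Local Open Scope ereal_scope.

Lemma esum_poisson_mass mu : (0 <= mu)%R ->
  \esum_(n in [set: nat]) (poisson_mass mu n)%:E = 1.
Proof.
move=> mu0; rewrite -nneseries_esumT => [|n]; last by rewrite lee_fin poisson_mass_ge0.
rewrite (_ : 1 = (expR (- mu))%:E * (expR mu)%:E); last first.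
  by rewrite -EFinM expRN mulVf ?gt_eqF ?expR_gt0.
under eq_eseriesr do rewrite /poisson_mass EFinM muleC.
rewrite nneseriesZl => [|n _]; last by rewrite lee_fin divr_ge0 // exprn_ge0.
congr (_ * _); rewrite expRE -EFin_lim; last first.
  by rewrite /pseries; under eq_fun do rewrite mulrC; exact: is_cvg_series_exp_coeff.
apply/congr_lim/funext => n /=; rewrite /pseries /series /= -sumEFin.
by under eq_bigr do rewrite mulrC.
Qed.

Lemma esum_poisson_mass_scale mu c : (0 <= mu)%R -> (0 <= c)%R ->
  \esum_(n in [set: nat]) (c * poisson_mass mu n)%:E = c%:E.
Proof.
move=> mu0 c0; rewrite -nneseries_esumT => [|n]; last first.
  by rewrite lee_fin mulr_ge0 ?poisson_mass_ge0.
under eq_eseriesr do rewrite EFinM.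
rewrite nneseriesZl => [|n _]; last by rewrite lee_fin poisson_mass_ge0.
by rewrite nneseries_esumT ?esum_poisson_mass ?mule1 // => n; rewrite lee_fin poisson_mass_ge0.
Qed.

(* Independent Poisson counts of rates [mu] and [la] add up to a Poisson count of
   rate [mu + la]; [T] carries an untouched second coordinate. *)
Lemma esum_poisson_conv (T : choiceType) mu la (F : nat -> T -> R) :
  (0 <= mu)%R -> (0 <= la)%R -> (forall a t, 0 <= F a t)%R ->
  \esum_(n in [set: nat]) \esum_(p in [set: nat * T])
      (poisson_mass mu n * poisson_mass la p.1 * F (n + p.1)%N p.2)%:E
  = \esum_(p in [set: nat * T]) (poisson_mass (mu + la) p.1 * F p.1 p.2)%:E.
Proof.
move=> mu0 la0 F0.
have term_ge0 n a m t : (0 <= poisson_mass mu n * poisson_mass la a * F m t)%R.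
  by rewrite mulr_ge0 ?F0 // mulr_ge0 ?poisson_mass_ge0.
transitivity (\esum_(p in [set: nat * T]) \esum_(n in `I_(p.1.+1))
    (poisson_mass mu n * poisson_mass la (p.1 - n) * F p.1 p.2)%:E); last first.
  apply: eq_esum => -[a t] _ /=; rewrite esum_ord // -mulr_suml.
  by rewrite poisson_mass_conv.
rewrite (esum_esum (J := fun=> [set: nat * T])) => [|*]; last by rewrite lee_fin.
rewrite (esum_esum (J := fun p => `I_(p.1.+1))) => [|*]; last by rewrite lee_fin.
rewrite (reindex_esum [set: nat * (nat * T)] _
  (fun x : nat * (nat * T) => ((x.1 + x.2.1)%N, x.2.2, x.1))).
  have -> : [set: nat] `*`` (fun=> [set: nat * T]) = [set: nat * (nat * T)].
    by apply/seteqP.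
  by apply: eq_esum => -[n [a t]] _ /=; rewrite addKn.
split=> [[n [a t]] _ /=|[n [a t]] [m [b u]] _ _ /= []|[[a t] n] /= [_ na]].
- by split=> //; rewrite ltnS leq_addr.
- by move=> + -> nm; rewrite nm => /eqP; rewrite eqn_add2l => /eqP ->.
- by exists (n, (a - n, t))%N => //=; rewrite subnKC // -ltnS.
Qed.

End poisson_mass.

Section ffun_cons.
Variables (T : Type) (K : nat).

Definition ffun_cons (x : T * {ffun 'I_K -> T}) : {ffun 'I_K.+1 -> T} :=
  [ffun k => if unlift ord0 k is Some k' then x.2 k' else x.1].

Lemma ffun_cons0 x : ffun_cons x ord0 = x.1.
Proof. by rewrite ffunE unlift_none. Qed.

Lemma ffun_consS x k : ffun_cons x (lift ord0 k) = x.2 k.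
Proof. by rewrite ffunE liftK. Qed.

Lemma ffun_cons_bij :
  set_bij [set: T * {ffun 'I_K -> T}] [set: {ffun 'I_K.+1 -> T}] ffun_cons.
Proof.
split=> // [[n r] [m u] _ _ /= eq_nrmu|r _].
  have := ffun_cons0 (n, r); rewrite eq_nrmu ffun_cons0 /= => ->; congr pair.
  by apply/ffunP => k; have := ffun_consS (n, r) k; rewrite eq_nrmu ffun_consS.
exists (r ord0, [ffun k => r (lift ord0 k)]) => //; apply/ffunP => k.
by rewrite ffunE; case: unliftP => [j ->|->]; rewrite ?ffunE.
Qed.

End ffun_cons.

Section poisson_counts.
Variable R : realType.
Local Open Scope ereal_scope.
Local Notation P := (@poisson_mass R).

(* An extra independent count [n] of rate [mu] joins the first total, the second, or
   neither. *)
Lemma esum_poisson_absorb (al be : bool) (mu la nu : R) (G : nat -> nat -> R) :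
  ~~ (al && be) -> (0 <= mu)%R -> (0 <= la)%R -> (0 <= nu)%R ->
  (forall a b, 0 <= G a b)%R ->
  \esum_(n in [set: nat]) \esum_(p in [set: nat * nat])
     (P la p.1 * P nu p.2 *
       (P mu n * G ((if al then n else 0) + p.1)%N ((if be then n else 0) + p.2)%N))%:E
  = \esum_(p in [set: nat * nat])
     (P ((if al then mu else 0) + la) p.1 * P ((if be then mu else 0) + nu) p.2
       * G p.1 p.2)%:E.
Proof.
move=> not_al_be mu0 la0 nu0 G0.
have P0 r n : (0 <= r)%R -> (0 <= P r n)%R by move=> r0; apply: poisson_mass_ge0.
case: al be not_al_be => -[] // _; rewrite ?add0r.
- transitivity (\esum_(p in [set: nat * nat])
    (P (mu + la) p.1 * (P nu p.2 * G p.1 p.2))%:E); last first.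
    by apply: eq_esum => p _; rewrite mulrA.
  rewrite -(esum_poisson_conv (F := fun a b => P nu b * G a b)%R) => // [|a b];
    last by rewrite mulr_ge0 ?P0.
  apply: eq_esum => n _; apply: eq_esum => -[a b] _ /=.
  by rewrite add0n; congr EFin; ring.
- rewrite [RHS](reindex_esum _ _ _ _ (swap_set_bij nat nat)) /=.
  transitivity (\esum_(q in [set: nat * nat])
    (P (mu + nu) q.1 * (P la q.2 * G q.2 q.1))%:E); last first.
    by apply: eq_esum => q _; congr EFin; ring.
  rewrite -(esum_poisson_conv (F := fun b a => P la a * G a b)%R) => // [|b a];
    last by rewrite mulr_ge0 ?P0.
  apply: eq_esum => n _; rewrite (reindex_esum _ _ _ _ (swap_set_bij nat nat)).
  by apply: eq_esum => -[b a] _ /=; rewrite add0n; congr EFin; ring.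
- rewrite esum_swap => [|n [a b]]; last by rewrite lee_fin ?(P0, G0, mulr_ge0).
  apply: eq_esum => -[a b] _ /=.
  rewrite -(esum_poisson_mass_scale mu0 (_ : 0 <= P la a * P nu b * G a b)%R);
    last by rewrite ?(P0, G0, mulr_ge0).
  by apply: eq_esum => n _; rewrite !add0n; congr EFin; ring.
Qed.

Lemma esum_poisson_mass0_pair (h : nat -> nat -> R) : (forall a b, 0 <= h a b)%R ->
  \esum_(p in [set: nat * nat]) (P 0 p.1 * P 0 p.2 * h p.1 p.2)%:E = (h 0 0)%:E.
Proof.
move=> h0; transitivity (\esum_(p in [set (0, 0)%N]) (h p.1 p.2)%:E); last first.
  by rewrite esum_set1 ?lee_fin.
rewrite [RHS]esum_mkcond; apply: eq_esum => -[a b] _; rewrite /poisson_mass oppr0 expR0.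
by case: a b => [|a] [|b];
  rewrite in_set1 /= !expr0n /= ?fact0 ?invr1 ?(mul0r, mulr0, mul1r, mulr1).
Qed.

(* The totals of independent Poisson counts over disjoint position sets [A] and [B]
   are independent Poisson counts. *)
Lemma esum_poisson_prod_split K (mu : 'I_K -> R) (A B : pred 'I_K)
    (h : nat -> nat -> R) :
  (forall k, 0 <= mu k)%R -> (forall k, ~~ (A k && B k)) -> (forall a b, 0 <= h a b)%R ->
  \esum_(r in [set: {ffun 'I_K -> nat}])
     ((\prod_(k < K) P (mu k) (r k)) *
       h (\sum_(k < K | A k) r k)%N (\sum_(k < K | B k) r k)%N)%:E
  = \esum_(p in [set: nat * nat])
     (P (\sum_(k < K | A k) mu k) p.1 * P (\sum_(k < K | B k) mu k) p.2 * h p.1 p.2)%:E.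
Proof.
elim: K mu A B h => [|K IH] mu A B h mu0 AB h0.
  rewrite !big_ord0 esum_poisson_mass0_pair //.
  have -> : [set: {ffun 'I_0 -> nat}] = [set [ffun=> 0%N]].
    by apply/seteqP; split=> r // _; apply/ffunP => -[].
  by rewrite esum_set1 ?lee_fin !big_ord0 mul1r.
set mu' := fun k : 'I_K => mu (lift ord0 k).
have sum_ge0 (C : pred 'I_K) : (0 <= \sum_(k < K | C k) mu' k)%R.
  by rewrite sumr_ge0 // => k _; apply: mu0.
rewrite (reindex_esum _ _ _ _ (ffun_cons_bij nat K)) esum_pair => [|x]; last first.
  by rewrite lee_fin mulr_ge0 ?h0 // prodr_ge0 // => k _; apply: poisson_mass_ge0.
rewrite !big_ord_recl_cond -esum_poisson_absorb ?sum_ge0 //.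
apply: eq_esum => n _ /=.
rewrite -(IH mu' (fun k => A (lift ord0 k)) (fun k => B (lift ord0 k))
  (fun a b => P (mu ord0) n *
     h ((if A ord0 then n else 0) + a)%N ((if B ord0 then n else 0) + b)%N)%R)
  => [|k|k|a b]; [|exact: mu0|exact: AB|by rewrite mulr_ge0 ?h0 ?poisson_mass_ge0].
apply: eq_esum => r _; congr EFin.
rewrite big_ord_recl !big_ord_recl_cond !ffun_cons0.
under eq_bigr do rewrite ffun_consS.
under [in X in h X _]eq_bigr do rewrite ffun_consS.
under [in X in h _ X]eq_bigr do rewrite ffun_consS.
by rewrite [RHS]mulrCA mulrA.
Qed.

End poisson_counts.

Section skellam.
Variable R : realType.
Local Notation P := (@poisson_mass R).

Lemma powR_ratio_sqrt (a b : R) (x : nat) : 0 < a -> 0 < b ->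
  (b / a) `^ (x%:R / 2) * Num.sqrt (a * b) ^+ x = b ^+ x.
Proof.
move=> a0 b0; have ba0 : 0 <= b / a by rewrite divr_ge0 ?ltW.
rewrite [x%:R / 2]mulrC powRrM powR12_sqrt // powR_mulrn ?sqrtr_ge0 //.
rewrite -exprMn -sqrtrM // (_ : b / a * (a * b) = b ^+ 2); last by field; rewrite gt_eqF.
by rewrite sqrtr_sqr gtr0_norm.
Qed.

Definition bessel_term (s : R) (x m : nat) : R := s ^+ (2 * m + x) / (m`! * (m + x)`!)%:R.

Lemma bessel_term_ge0 s x m : 0 <= s -> 0 <= bessel_term s x m.
Proof. by move=> s0; rewrite divr_ge0 ?exprn_ge0. Qed.

Lemma is_cvg_series_bessel_term s x : 0 <= s -> cvgn (series (bessel_term s x)).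
Proof.
move=> s0; apply: (@series_le_cvg _ _ (s ^+ x *: exp_coeff (s ^+ 2))) => [m|m|m|].
- exact: bessel_term_ge0.
- by rewrite /= /exp_coeff mulr_ge0 ?divr_ge0 ?exprn_ge0.
- have -> : bessel_term s x m = s ^+ x * exp_coeff (s ^+ 2) m / (m + x)`!%:R.
    by rewrite /bessel_term /exp_coeff /= natrM invfM exprD -exprM; ring.
  rewrite ler_piMr ?mulr_ge0 ?divr_ge0 ?exprn_ge0 //.
  by rewrite invf_le1 ?ler1n ?ltr0n ?fact_gt0.
- exact/is_cvg_seriesZ/is_cvg_series_exp_coeff.
Qed.

Lemma besselIE s x : besselI x (2 * s) = limn (series (bessel_term s x)).
Proof. by rewrite /besselI [2 * s]mulrC mulfK ?pnatr_eq0. Qed.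

Definition skellam_mass (l1 l2 : R) (x : nat) : R :=
  expR (- (l1 + l2)) * (l2 / l1) `^ (x%:R / 2) * besselI x (2 * Num.sqrt (l1 * l2)).

Local Open Scope ereal_scope.

Lemma nneseries_poisson_skellam (l1 l2 : R) (x : nat) : (0 < l1)%R -> (0 < l2)%R ->
  \sum_(a <oo) (P l1 a * P l2 (a + x))%:E = (skellam_mass l1 l2 x)%:E.
Proof.
move=> l10 l20; set s := Num.sqrt (l1 * l2).
have s0 : (0 <= s)%R by apply: sqrtr_ge0.
have term a : (P l1 a * P l2 (a + x) =
    expR (- (l1 + l2)) * (l2 / l1) `^ (x%:R / 2) * bessel_term s x a)%R.
  rewrite /poisson_mass /bessel_term exprD (exprD s) -(powR_ratio_sqrt x l10 l20) -/s.
  rewrite exprM sqr_sqrtr ?mulr_ge0 ?ltW // opprD expRD exprMn natrM invfM.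
  (* Hiding the factorials keeps [ring] from trying to normalise them. *)
  by move: (a`!%:R)%R ((a + x)`!%:R)%R => fa fax; ring.
under eq_eseriesr do rewrite term EFinM.
rewrite nneseriesZl => [|a _]; last by rewrite lee_fin bessel_term_ge0.
rewrite /skellam_mass besselIE [RHS]EFinM; congr (_ * _).
rewrite -EFin_lim; last exact: is_cvg_series_bessel_term.
by apply/congr_lim/funext => n /=; rewrite /series /= sumEFin.
Qed.

End skellam.

Section tie_loss.
Variable R : realType.
Local Notation P := (@poisson_mass R).

Definition tie_loss (x y : R) : R := if x < y then 1 else if x == y then 1 / 2 else 0.

Lemma tie_loss_ge0 x y : 0 <= tie_loss x y.
Proof. by rewrite /tie_loss; case: ifP => _ //; case: ifP. Qed.

Lemma tie_loss_homo (f : nat -> R) a b : {homo f : m n / (m < n)%N >-> m < n} ->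
  tie_loss (f a) (f b) = tie_loss a%:R b%:R.
Proof.
move=> f_homo; rewrite /tie_loss ltr_nat eqr_nat.
case: ltngtP => [ab|ba|->]; last by rewrite ltxx eqxx.
  by rewrite f_homo.
by have fba := f_homo _ _ ba; rewrite (lt_gtF fba) (gt_eqF fba).
Qed.

Local Open Scope ereal_scope.

Lemma esum_pair_diag (F : nat -> nat -> R) :
  (forall a b, 0 <= F a b)%R -> (forall a b, (b < a)%N -> F a b = 0%R) ->
  \esum_(p in [set: nat * nat]) (F p.1 p.2)%:E = \sum_(x <oo) \sum_(a <oo) (F a (a + x)%N)%:E.
Proof.
move=> F0 F_lt; pose Q := [set p : nat * nat | (p.1 <= p.2)%N].
transitivity (\esum_(p in Q) (F p.1 p.2)%:E).
  rewrite [RHS]esum_mkcond; apply: eq_esum => -[a b] _ /=.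
  case: ifPn => // abQ; rewrite F_lt // ltnNge.
  by apply: contraNN abQ => ab; exact: mem_set.
rewrite (reindex_esum [set: nat * nat] Q (fun x => (x.2, (x.2 + x.1)%N))) /=; last first.
  split=> [[x a] _|[x a] [y b] _ _ /= [-> /eqP]|[a b] /= ab].
  - by rewrite /Q /= leq_addr.
  - by rewrite eqn_add2l => /eqP ->.
  - by exists (b - a, a)%N => //=; rewrite subnKC.
rewrite esum_pair => [|x]; last by rewrite lee_fin.
rewrite -nneseries_esumT => [|x]; last by apply: esum_ge0 => a _; rewrite lee_fin.
by apply: eq_eseriesr => x _; rewrite -nneseries_esumT // => a; rewrite lee_fin.
Qed.

Lemma esum_poisson_tie_loss (l1 l2 : R) : (0 < l1)%R -> (0 < l2)%R ->
  \esum_(p in [set: nat * nat]) (P l1 p.1 * P l2 p.2 * tie_loss p.1%:R p.2%:R)%:E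
  = ((1 / 2) * skellam_mass l1 l2 0)%:E + \sum_(1 <= x <oo) (skellam_mass l1 l2 x)%:E.
Proof.
move=> l10 l20; have P0 l n : (0 < l)%R -> (0 <= P l n)%R by move/ltW/poisson_mass_ge0.
rewrite (esum_pair_diag (F := fun a b => P l1 a * P l2 b * tie_loss a%:R b%:R)%R)
  => [|a b|a b ba]; last first.
- by rewrite /tie_loss ltr_nat ltnNge (ltnW ba) eqr_nat gtn_eqF // mulr0.
- by rewrite mulr_ge0 ?tie_loss_ge0 // mulr_ge0 ?P0.
have loss_diag a x : tie_loss a%:R (a + x)%N%:R = (if x == 0%N then 1 / 2 else 1)%R.
  rewrite /tie_loss ltr_nat eqr_nat.
  by case: x => [|x]; rewrite ?addn0 ?ltnn ?eqxx // addnS ltnS leq_addr.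
rewrite (nneseries_recl (P := xpredT)) // => [|x _]; last first.
  by apply: nneseries_ge0 => a _ _; rewrite lee_fin mulr_ge0 ?tie_loss_ge0 // mulr_ge0 ?P0.
congr (_ + _).
  under eq_eseriesr do rewrite loss_diag EFinM muleC.
  rewrite nneseriesZl => [|a _]; last by rewrite lee_fin mulr_ge0 ?P0.
  by rewrite nneseries_poisson_skellam // -EFinM.
rewrite !ereal_series; apply: eq_eseriesr => x /= x1.
under eq_eseriesr do rewrite loss_diag gtn_eqF // mulr1.
exact: nneseries_poisson_skellam.
Qed.

End tie_loss.

Section likelihood.
Variables (R : realType) (cs cn : R).
Hypotheses (cs_gt0 : 0 < cs) (cn_gt0 : 0 < cn).
Local Notation P := (@poisson_mass R).
Local Notation lik := (lik cs cn).

Lemma lik_poisson K (c : {ffun 'I_K -> bool}) r :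
  lik c r = \prod_(k < K) P (cs * (c k)%:R + cn) (r k).
Proof. by apply: eq_bigr => k _; rewrite /poisson_mass mulrAC. Qed.

Lemma lik_ge0 K (c : {ffun 'I_K -> bool}) r : 0 <= lik c r.
Proof.
rewrite lik_poisson; apply: prodr_ge0 => k _.
by rewrite poisson_mass_ge0 // addr_ge0 ?mulr_ge0 ?ler0n // ltW.
Qed.

Lemma lik_factor K (c : {ffun 'I_K -> bool}) r :
  lik c r = expR (- (cs * (weight c)%:R)) * \prod_(k < K) P cn (r k) *
            ((cs + cn) / cn) ^+ (\sum_(k < K) c k * r k)%N.
Proof.
rewrite lik_poisson -prodrXr /weight card_set_predE natr_sum mulr_sumr -sumrN expR_sum.
rewrite -!big_split /=; apply: eq_bigr => k _.
by case: (c k); rewrite ?mulr1 ?mul1n ?mulr0 ?add0r ?oppr0 ?expR0 ?mul1r ?mulr1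
  // poisson_mass_tilt // gt_eqF.
Qed.

Lemma lik_tie_loss K (c1 c2 : {ffun 'I_K -> bool}) r : weight c1 = weight c2 ->
  tie_loss (lik c1 r) (lik c2 r) =
  tie_loss (\sum_(k < K | c1 k && ~~ c2 k) r k)%N%:R
           (\sum_(k < K | ~~ c1 k && c2 k) r k)%N%:R.
Proof.
move=> w12; set C := (\sum_(k < K | c1 k && c2 k) r k)%N.
pose f n := expR (- (cs * (weight c1)%:R)) * \prod_(k < K) P cn (r k) *
            ((cs + cn) / cn) ^+ (n + C).
have -> : lik c1 r = f (\sum_(k < K | c1 k && ~~ c2 k) r k)%N.
  by rewrite lik_factor (sum_mask_split _ c2).
have -> : lik c2 r = f (\sum_(k < K | ~~ c1 k && c2 k) r k)%N.
  rewrite lik_factor (sum_mask_split _ c1) /f w12 /C.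
  by congr (_ * _ ^+ (_ + _)); apply: eq_bigl => k; rewrite andbC.
apply: tie_loss_homo => m n mn.
rewrite ltr_pM2l ?ltr_eXn2l ?ltn_add2r //.
  by rewrite ltr_pdivlMr // mul1r ltrDr.
rewrite mulr_gt0 ?expR_gt0 // prodr_gt0 // => k _.
by rewrite mulr_gt0 ?expR_gt0 // divr_gt0 ?exprn_gt0 // ltr0n fact_gt0.
Qed.

End likelihood.

Section hamming.
Variable K : nat.
Implicit Types a b : {ffun 'I_K -> bool}.

Lemma hamming_sum a b :
  hamming a b = (\sum_k (a k && ~~ b k) + \sum_k (~~ a k && b k))%N.
Proof.
rewrite /hamming card_set_predE -big_split; apply: eq_bigr => k _.
by case: (a k); case: (b k).
Qed.

Lemma weight_sum a b : weight a = (\sum_k (a k && ~~ b k) + \sum_k (a k && b k))%N.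
Proof.
rewrite /weight card_set_predE -big_split; apply: eq_bigr => k _.
by case: (a k); case: (b k).
Qed.

Lemma hamming_gt0 a b : a != b -> (0 < hamming a b)%N.
Proof.
move=> ab; apply/card_gt0P; have /existsP[k abk] : [exists k, a k != b k].
  by apply: contraR ab => /existsPn eq_ab; apply/eqP/ffunP => k; apply/eqP/negbNE.
by exists k; rewrite inE.
Qed.

Lemma eq_weight_diff_sum a b : weight a = weight b ->
  (\sum_k (a k && ~~ b k) = \sum_k (~~ a k && b k))%N.
Proof.
move=> wab; apply/eqP; rewrite -(eqn_add2r (\sum_k (a k && b k))%N).
rewrite -weight_sum wab (weight_sum b a).
by apply/eqP; congr (_ + _)%N; apply: eq_bigr => k _; rewrite andbC.
Qed.

Lemma eq_weight_hamming a b : weight a = weight b ->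
  hamming a b = (\sum_k (a k && ~~ b k)).*2.
Proof. by move=> wab; rewrite hamming_sum -eq_weight_diff_sum // addnn. Qed.

End hamming.

Lemma subr_invn_le_half (R : realFieldType) (n : nat) : (0 < n)%N ->
  1 - n%:R^-1 <= n.-1%:R / 2 :> R.
Proof.
case: n => [//|[_|n _]]; first by rewrite invr1 subrr mul0r.
rewrite -natr1 /=; set x := n.+1%:R.
have x1 : 1 <= x by rewrite ler1n.
rewrite (_ : 1 - (x + 1)^-1 = x / (x + 1)); last by field; rewrite gt_eqF // ltr_wpDl.
rewrite ler_pM2l ?lef_pV2 ?posrE ?ltr_wpDl //; lra.
Qed.

Section detection.
Variables (R : realType) (cs cn : R) (K M : nat) (s : 'I_M -> {ffun 'I_K -> bool}).
Local Notation lik := (lik cs cn).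

(* Union bound with ties: among the [#|S|] maximisers, [i] is missed with probability
   [1 - 1/#|S|], which is at most half the number of other maximisers. *)
Lemma pdetect_miss_le r i :
  1 - pdetect cs cn s r i <= \sum_(j < M | j != i) tie_loss (lik (s i) r) (lik (s j) r).
Proof.
rewrite /pdetect; set S := argmax_set cs cn s r.
case: ifPn => iS; last first.
  move: iS; rewrite inE negb_forall => /existsP[j]; rewrite -ltNge => lt_ij.
  have ji : j != i by apply: contraTneq lt_ij => ->; rewrite ltxx.
  rewrite subr0 (bigD1 j) //= {1}/tie_loss lt_ij lerDl.
  by apply: sumr_ge0 => k _; apply: tie_loss_ge0.
have tie j : j \in S -> tie_loss (lik (s i) r) (lik (s j) r) = 1 / 2.
  move: iS; rewrite !inE => /forallP i_max /forallP j_max.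
  by rewrite /tie_loss lt_neqAle eq_le i_max j_max.
have S_gt0 : (0 < #|S|)%N by apply/card_gt0P; exists i.
apply: le_trans (subr_invn_le_half R S_gt0) _; rewrite (cardsD1 i S) iS /=.
have -> : #|S :\ i|%:R / 2 = \sum_(j in S :\ i) tie_loss (lik (s i) r) (lik (s j) r).
  rewrite (eq_bigr (fun=> 1 / 2)) => [|j /setD1P[_ /tie] //].
  by rewrite sumr_const mulr_natl mul1r.
rewrite [X in _ <= X](bigID (mem S)) /= -[X in X <= _]addr0.
apply: lerD; last by apply: sumr_ge0 => j _; apply: tie_loss_ge0.
rewrite (eq_bigl (fun j => (j != i) && (j \in S))) => [|j]; first exact: lexx.
by rewrite !inE andbC.
Qed.

End detection.

Section pairwise_error.
Variables (R : realType) (cs cn : R).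
Hypotheses (cs_gt0 : 0 < cs) (cn_gt0 : 0 < cn).
Local Notation lik := (lik cs cn).
Local Open Scope ereal_scope.

Lemma esum_lik_miss_le K M (s : 'I_M -> {ffun 'I_K -> bool}) i :
  \esum_(r in [set: {ffun 'I_K -> nat}]) (lik (s i) r * (1 - pdetect cs cn s r i))%:E
  <= \sum_(j < M | j != i)
       \esum_(r in [set: {ffun 'I_K -> nat}])
         (lik (s i) r * tie_loss (lik (s i) r) (lik (s j) r))%:E.
Proof.
rewrite -esum_sum => [|r j _ _]; last by rewrite lee_fin mulr_ge0 ?lik_ge0 ?tie_loss_ge0.
apply: le_esum => r _; rewrite sumEFin lee_fin -mulr_sumr.
by rewrite ler_wpM2l ?lik_ge0 ?pdetect_miss_le.
Qed.

Lemma esum_lik_tie_loss K (ci cj : {ffun 'I_K -> bool}) :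
  ci != cj -> weight ci = weight cj ->
  \esum_(r in [set: {ffun 'I_K -> nat}]) (lik ci r * tie_loss (lik ci r) (lik cj r))%:E
  = ((1 / 2) * fd cs cn (hamming ci cj) 0)%:E
    + \sum_(1 <= x <oo) (fd cs cn (hamming ci cj) x)%:E.
Proof.
move=> cij wij; have dE := eq_weight_hamming wij.
pose mu k := (cs * (ci k)%:R + cn)%R.
have mu0 k : (0 <= mu k)%R by rewrite addr_ge0 ?mulr_ge0 ?ler0n // ltW.
under eq_esum do rewrite lik_tie_loss // [in X in (X * _)%R]lik_poisson.
rewrite (esum_poisson_prod_split (mu := mu) (A := fun k => ci k && ~~ cj k)
  (B := fun k => ~~ ci k && cj k) (h := fun a b => tie_loss a%:R b%:R)) => // [|k|a b];
  last first.
- exact: tie_loss_ge0.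
- by case: (ci k); case: (cj k).
have d_gt0 : (0 < (hamming ci cj)%:R :> R)%R by rewrite ltr0n hamming_gt0.
have -> : (\sum_(k < K | ci k && ~~ cj k) mu k = (hamming ci cj)%:R * (cs + cn) / 2)%R.
  rewrite (eq_bigr (fun=> cs + cn)%R) => [|k /andP[cik _]]; last by rewrite /mu cik mulr1.
  by rewrite sumr_pred_const dE -muln2 natrM; field.
have -> : (\sum_(k < K | ~~ ci k && cj k) mu k = (hamming ci cj)%:R * cn / 2)%R.
  rewrite (eq_bigr (fun=> cn)) => [|k /andP[/negbTE cik _]]; last first.
    by rewrite /mu cik mulr0 add0r.
  by rewrite sumr_pred_const dE eq_weight_diff_sum // -muln2 natrM; field.
by rewrite esum_poisson_tie_loss // !mulr_gt0 ?addr_gt0 ?invr_gt0.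
Qed.

End pairwise_error.

Theorem corollary2 (R : realType) (K M w : nat) (s : 'I_M -> {ffun 'I_K -> bool})
    (cs cn : R) :
  (2 <= M)%N -> injective s -> (forall i, weight (s i) = w) ->
  0 < cs -> 0 < cn ->
  (Pe_code cs cn s <=
   ((M%:R)^-1)%:E *
   \sum_(i < M) \sum_(j < M | j != i)
      (((1 / 2) * fd cs cn (hamming (s i) (s j)) 0)%:E
       + \sum_(1 <= x <oo) (fd cs cn (hamming (s i) (s j)) x)%:E))%E.
Proof.
move=> _ s_inj s_w cs_gt0 cn_gt0.
apply: lee_wpmul2l; first by rewrite lee_fin invr_ge0.
apply: lee_sum => i _; apply: le_trans (esum_lik_miss_le cs_gt0 cn_gt0 s i) _.
apply: lee_sum => j ji; rewrite esum_lik_tie_loss ?s_w //.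
by apply: contra ji => /eqP /s_inj ->.
Qed.
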